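(* Let $1\le p\le n-1$ and let $a\in R[t_1,\ldots,t_n]$ satisfy $s_p.a=a$. Then $T_pa=aT_p$ in $\mathcal H_{n,r}$.
   Context: Standing setup: $R$ is an integral domain, $n\ge 2$, $r\ge 1$, and $q,u_1,\ldots,u_r\in R$ with $q$ invertible in $R$ and $\Delta:=\prod_{1\le j<i\le r}(u_i-u_j)$ invertible in $R$. For $1\le c\le r$ let $F_c(X)\in R[X]$ be the unique polynomial of degree $\le r-1$ with $F_c(u_{c'})=\delta_{c,c'}\Delta$ for all $1\le c'\le r$. The modified Ariki–Koike (Shoji) algebra $\mathcal H_{n,r}=\mathcal H_{n,r}(R,q,u_1,\ldots,u_r)$ is the associative $R$-algebra generated by $t_1,\ldots,t_n,T_1,\ldots,T_{n-1}$ subject to: $(T_i-q)(T_i+q^{-1})=0$; $(t_i-u_1)\cdots(t_i-u_r)=0$; $T_iT_{i+1}T_i=T_{i+1}T_iT_{i+1}$; $T_iT_j=T_jT_i$ for $|i-j|\ge2$; $t_it_j=t_jt_i$; $T_jt_k=t_kT_j$ for $k\ne j,j+1$; and for $2\le j\le n$: $T_{j-1}t_j=t_{j-1}T_{j-1}+\Delta^{-2}\sum_{1\le c_1<c_2\le r}(u_{c_2}-u_{c_1})(q-q^{-1})F_{c_1}(t_{j-1})F_{c_2}(t_j)$ and $T_{j-1}t_{j-1}=t_jT_{j-1}-\Delta^{-2}\sum_{1\le c_1<c_2\le r}(u_{c_2}-u_{c_1})(q-q^{-1})F_{c_1}(t_{j-1})F_{c_2}(t_j)$. $R[t_1,\ldots,t_n]$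 is the (commutative) subalgebra generated by the $t_i$; it is isomorphic to $R[X_1,\ldots,X_n]/(\prod_{j=1}^r(X_i-u_j):1\le i\le n)$, and the symmetric group $\mathfrak S(n)$ acts on it by $R$-algebra automorphisms via $w.t_i=t_{w(i)}$. $s_p\in\mathfrak S(n)$ is the simple transposition $(p\ p+1)$. *)

From HB Require Import structures.
From mathcomp Require Import all_boot all_order all_algebra all_fingroup.
From mathcomp Require Import mpoly.
Set Implicit Arguments. Unset Strict Implicit. Unset Printing Implicit Defensive.
Import GRing.Theory.
Local Open Scope ring_scope.

(* Conventions (0-based indices):
   t i  (i : 'I_n)            stands for the paper's t_{i+1};
   T i  (i : 'I_n, i.+1 < n)   stands for the paper's T_{i+1};
   T i for i = n-1 is NOT a generator and is left unconstrained. *)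

Definition Delta (R : comNzRingType) (r : nat) (u : 'I_r -> R) : R :=
  \prod_(i < r) \prod_(j < r | (j < i)%N) (u i - u j).

Definition peval (R : comNzRingType) (A : algType R) (f : {poly R}) (x : A) : A :=
  \sum_(i < size f) f`_i *: x ^+ i.

Definition is_F_family (R : comNzRingType) (r : nat) (u : 'I_r -> R)
    (F : 'I_r -> {poly R}) : Prop :=
  forall c : 'I_r, (size (F c) <= r)%N /\
    forall c' : 'I_r, (F c).[u c'] = (c == c')%:R * Delta u.

Definition corr (R : comUnitRingType) (A : algType R) (r : nat) (q : R)
    (u : 'I_r -> R) (F : 'I_r -> {poly R}) (x y : A) : A :=
  \sum_(c1 < r) \sum_(c2 < r | (c1 < c2)%N)
     ((Delta u)^-2 * (u c2 - u c1) * (q - q^-1)) *: (peval (F c1) x * peval (F c2) y).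


(* The elements t, T of the R-algebra A satisfy the defining relations of the
   modified Ariki-Koike algebra H_{n,r}(R,q,u_1..u_r). *)
Definition AK_relations (R : comUnitRingType) (A : algType R) (n r : nat)
    (q : R) (u : 'I_r -> R) (F : 'I_r -> {poly R})
    (t : 'I_n -> A) (T : 'I_n -> A) : Prop :=
  (forall i : 'I_n, (i.+1 < n)%N -> (T i - q%:A) * (T i + (q^-1)%:A) = 0) /\
  (forall i : 'I_n, \prod_(c < r) (t i - (u c)%:A) = 0) /\
  (forall i j : 'I_n, val j = i.+1 -> (j.+1 < n)%N ->
      T i * T j * T i = T j * T i * T j) /\
  (forall i j : 'I_n, (i.+1 < n)%N -> (j.+1 < n)%N ->
      ((i.+2 <= j)%N || (j.+2 <= i)%N) -> T i * T j = T j * T i) /\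
  (forall i j : 'I_n, t i * t j = t j * t i) /\
  (forall j k : 'I_n, (j.+1 < n)%N -> val k != val j -> val k != j.+1 ->
      T j * t k = t k * T j) /\
  (* for 2 <= j <= n (here i = j-2, i' = j-1 in 0-based indexing) :
     T_{j-1} t_j = t_{j-1} T_{j-1} + corr(t_{j-1}, t_j)
     T_{j-1} t_{j-1} = t_j T_{j-1} - corr(t_{j-1}, t_j) *)
  (forall i i' : 'I_n, val i' = i.+1 ->
      T i * t i' = t i * T i + corr q u F (t i) (t i') /\
      T i * t i = t i' * T i - corr q u F (t i) (t i')).

Definition in_AK_ideal (R : comNzRingType) (n r : nat) (u : 'I_r -> R)
    (P : {mpoly R[n]}) : Prop :=
  exists c : 'I_n -> {mpoly R[n]},
    P = \sum_(i < n) c i * \prod_(j < r) ('X_i - (u j)%:MP).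

From HB Require Import structures.
From mathcomp Require Import all_boot all_order all_algebra all_fingroup.
From mathcomp Require Import mpoly.
Import GRing.Theory.
Local Open Scope ring_scope.

(* Write x = t_p, y = t_{p+1}.  Since F_c vanishes at every u_c' with c' <> c,
   one has F_c(x) x = u_c F_c(x); hence the correction term of the defining
   relations factors as corr(x, y) = k (y - x) with
     k = Delta^-2 (q - q^-1) sum_{c1<c2} F_c1(x) F_c2(y),
   an element commuting with all the t_i.  The relations then say that T_p
   acts on the generators as a "twisted derivation":
     T_p t_i = t_{s_p(i)} T_p + k (t_i - t_{s_p(i)}),
   and this identity propagates multiplicatively (a Leibniz rule) and linearly
   to every g in R[t_1..t_n]:  T_p g = (s_p.g) T_p + k (g - s_p.g).
   For a symmetric a the last term vanishes, which is the theorem.  Elements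
   of R[t_1..t_n] are represented by polynomials P evaluated at t; the
   hypothesis "s_p.a = a" is that P - s_p.P lies in the ideal of relations,
   which evaluation at t kills. *)

Lemma peval_horner (R : comNzRingType) (A : algType R) (f : {poly R}) (x : A) :
  peval f x = horner_alg x f.
Proof.
rewrite /peval /horner_alg /horner_morph (horner_coef_wide (n:=size f)) ?size_poly //.
by apply: eq_bigr => i _; rewrite coef_map /= mulr_algl.
Qed.

(* Any single difference u_b - u_a (a < b) divides Delta, hence is a unit. *)
Lemma Delta_unit_pair (R : comUnitRingType) (r : nat) (u : 'I_r -> R) (a b : 'I_r) :
  Delta u \is a GRing.unit -> (a < b)%N -> u b - u a \is a GRing.unit.
Proof.
move=> DU ab; move: DU; rewrite /Delta (bigD1 b) //= unitrM => /andP[Hb _].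
by move: Hb; rewrite (bigD1 a) //= unitrM => /andP[].
Qed.

Lemma uniq_roots_u (R : comUnitRingType) (r : nat) (u : 'I_r -> R) :
  Delta u \is a GRing.unit -> uniq_roots [seq u c | c <- enum 'I_r].
Proof.
move=> DU.
have: pairwise (fun a b : 'I_r => (a < b)%N) (enum 'I_r).
  rewrite -(pairwise_map val (fun a b => (a < b)%N)) val_enum_ord.
  by rewrite -sorted_pairwise ?iota_ltn_sorted //; exact: ltn_trans.
elim: (enum 'I_r) => [|a s IH] //= /andP[Ha Hs].
rewrite IH // andbT all_map; apply: sub_all Ha => b ab /=.
by rewrite /diff_roots mulrC eqxx Delta_unit_pair.
Qed.

(* If prod_c (x - u_c) = 0 then F_c(x) x = u_c F_c(x): the polynomial
   F_c (X - u_c) vanishes at all u_c', so it is a multiple of prod_c' (X - u_c'). *)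
Lemma peval_F_mul {R : idomainType} {A : algType R} {r : nat} {u : 'I_r -> R}
  {F : 'I_r -> {poly R}} {x : A} (c : 'I_r) :
  Delta u \is a GRing.unit -> is_F_family u F ->
  \prod_(c < r) (x - (u c)%:A) = 0 ->
  peval (F c) x * x = u c *: peval (F c) x.
Proof.
move=> DU HF Hx.
have [Q HQ] : exists Q, F c * ('X - (u c)%:P) =
    Q * \prod_(z <- [seq u c | c <- enum 'I_r]) ('X - z%:P).
  apply: uniq_roots_prod_XsubC; last exact: uniq_roots_u.
  apply/allP => z /mapP [j _ ->]; rewrite /root hornerM hornerXsubC (proj2 (HF c) j).
  by have [->|ne] := eqVneq c j; rewrite ?eqxx ?subrr ?mulr0 ?mul0r.
move/(congr1 (horner_alg x)): HQ.
rewrite !rmorphM /= rmorphB /= horner_algX horner_algC big_map big_enum /= rmorph_prod /=.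
under eq_bigr do rewrite rmorphB /= horner_algX horner_algC.
by rewrite Hx mulr0 -peval_horner mulrBr mulr_algr => /eqP; rewrite subr_eq0 => /eqP.
Qed.

Lemma comm_peval {R : comNzRingType} {A : algType R} (f : {poly R}) {a b : A} :
  GRing.comm a b -> GRing.comm a (peval f b).
Proof.
move=> ab; apply: commr_sum => i _.
by rewrite /GRing.comm -scalerAr -scalerAl (commrX i ab).
Qed.

(* The correction term divided by (y - x). *)
Definition corr_quot {R : comUnitRingType} {A : algType R} {r : nat} (q : R)
    (u : 'I_r -> R) (F : 'I_r -> {poly R}) (x y : A) : A :=
  \sum_(c1 < r) \sum_(c2 < r | (c1 < c2)%N)
     ((Delta u)^-2 * (q - q^-1)) *: (peval (F c1) x * peval (F c2) y).

Section CorrectionTerm.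
Context {R : idomainType} {A : algType R} {r : nat} {q : R} {u : 'I_r -> R}.
Context {F : 'I_r -> {poly R}} {x y : A}.

Lemma comm_corr_quot (z : A) :
  GRing.comm z x -> GRing.comm z y -> GRing.comm z (corr_quot q u F x y).
Proof.
move=> zx zy; apply: commr_sum => c1 _; apply: commr_sum => c2 _.
rewrite /GRing.comm -scalerAr -scalerAl; congr (_ *: _).
by apply: commrM; apply: comm_peval.
Qed.

Lemma corr_factor :
  Delta u \is a GRing.unit -> is_F_family u F -> GRing.comm x y ->
  \prod_(c < r) (x - (u c)%:A) = 0 -> \prod_(c < r) (y - (u c)%:A) = 0 ->
  corr q u F x y = corr_quot q u F x y * (y - x).
Proof.
move=> DU HF xy x0 y0; rewrite /corr /corr_quot mulr_suml; apply: eq_bigr => c1 _.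
rewrite mulr_suml; apply: eq_bigr => c2 _.
have E : peval (F c1) x * peval (F c2) y * (y - x) =
    (u c2 - u c1) *: (peval (F c1) x * peval (F c2) y).
  rewrite mulrBr -!mulrA (peval_F_mul _ DU HF y0).
  rewrite -(comm_peval (F c2) xy) mulrA (peval_F_mul _ DU HF x0).
  by rewrite -scalerAr -scalerAl -scalerBl.
by rewrite -scalerAl E scalerA mulrAC.
Qed.

End CorrectionTerm.

Lemma big_prod_split_comm (A : pzRingType) (I : Type) (s : seq I) (a b : I -> A) :
  (forall i j, GRing.comm (b i) (a j)) ->
  \prod_(i <- s) (a i * b i) = (\prod_(i <- s) a i) * (\prod_(i <- s) b i).
Proof.
move=> ba; elim: s => [|x s IH]; first by rewrite !big_nil mulr1.
rewrite !big_cons IH -!mulrA; congr (_ * _); rewrite !mulrA; congr (_ * _).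
by apply: commr_prod => j _; apply: ba.
Qed.

Section CommutingEvaluation.
Context {R : comNzRingType} {A : algType R} {n : nat} {t : 'I_n -> A}.
Hypothesis t_comm : forall i j, GRing.comm (t i) (t j).

Local Notation phi := (mmap (in_alg A) t).

Lemma mmap1D (m1 m2 : 'X_{1..n}) : mmap1 t (m1 + m2)%MM = mmap1 t m1 * mmap1 t m2.
Proof.
rewrite /mmap1 -big_prod_split_comm.
  by apply: eq_bigr => i _; rewrite mnmDE exprD.
by move=> i j; apply/commrX/commr_sym/commrX.
Qed.

Lemma mmapM (P Q : {mpoly R[n]}) : phi (P * Q) = phi P * phi Q.
Proof.
elim/mpolyind: P => [|c m P _ _ IH]; first by rewrite mul0r !mmap0 mul0r.
rewrite mulrDl !mmapD IH mulrDl; congr (_ + _).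
rewrite -scalerAl !mmapZ mmapX -mulrA; congr (_ * _); clear IH.
elim/mpolyind: Q => [|c' m' Q _ _ IHQ]; first by rewrite mulr0 !mmap0 mulr0.
rewrite mulrDr !mmapD IHQ mulrDr; congr (_ + _).
by rewrite -scalerAr !mmapZ -mpolyXD !mmapX mmap1D /= !mulr_algl scalerAr.
Qed.

Lemma mmap1P : phi 1 = 1.
Proof. by rewrite -mpolyC1 mmapC /= scale1r. Qed.

Lemma mmapXi (i : 'I_n) : phi 'X_i = t i.
Proof. by rewrite mmapX mmap1U. Qed.

Lemma comm_mmap (z : A) :
  (forall i, GRing.comm z (t i)) -> forall P : {mpoly R[n]}, GRing.comm z (phi P).
Proof.
move=> zt; elim/mpolyind => [|c m P _ _ IH]; first by rewrite mmap0; apply: commr0.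
rewrite mmapD mmapZ mmapX; apply: commrD => //.
apply: commrM; first by apply: commr_sym; apply: comm_alg.
by apply: commr_prod => i _; apply: commrX.
Qed.

End CommutingEvaluation.

Lemma mmap_AK_ideal {R : comNzRingType} {A : algType R} {n r : nat} {u : 'I_r -> R}
    {t : 'I_n -> A} {Q : {mpoly R[n]}} :
  (forall i j, GRing.comm (t i) (t j)) ->
  (forall i, \prod_(c < r) (t i - (u c)%:A) = 0) ->
  in_AK_ideal u Q -> mmap (in_alg A) t Q = 0.
Proof.
move=> t_comm t_root [c ->]; rewrite raddf_sum /= big1 // => i _.
rewrite mmapM // (big_morph _ (mmapM t_comm) mmap1P).
under eq_bigr do rewrite mmapB mmapC mmapXi.
by rewrite t_root mulr0.
Qed.

Lemma twisted_leibniz (A : pzRingType) (T k a a' b b' : A) :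
  GRing.comm k a' ->
  T * a = a' * T + k * (a - a') -> T * b = b' * T + k * (b - b') ->
  T * (a * b) = (a' * b') * T + k * (a * b - a' * b').
Proof.
move=> ka' Ta Tb.
rewrite mulrA Ta mulrDl -mulrA Tb mulrDr !mulrA -ka' -!mulrA -addrA -mulrDr.
by congr (_ + k * _); rewrite mulrBr mulrBl addrC addrA subrK.
Qed.

Section TwistedDerivation.
Context {R : comNzRingType} {A : algType R} {n : nat} {t : 'I_n -> A}.
Context {s : 'S_n} {T k : A}.
Hypothesis t_comm : forall i j, GRing.comm (t i) (t j).
Hypothesis k_comm : forall i, GRing.comm k (t i).
Hypothesis T_t : forall i, T * t i = t (s i) * T + k * (t i - t (s i)).

Local Notation phi := (mmap (in_alg A) t).

Let twisted (P : {mpoly R[n]}) : Prop :=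
  T * phi P = phi (msym s P) * T + k * (phi P - phi (msym s P)).

Let twisted_mul P Q : twisted P -> twisted Q -> twisted (P * Q).
Proof.
rewrite /twisted msymM !mmapM //; apply: twisted_leibniz.
exact: comm_mmap.
Qed.

Let twisted_one : twisted 1.
Proof. by rewrite /twisted msym1 mmap1P subrr mulr0 addr0 mulr1 mul1r. Qed.

Let twisted_var i : twisted 'X_i.
Proof.
rewrite /twisted; have -> : msym s ('X_i : {mpoly R[n]}) = 'X_(s i).
  by rewrite /msym mmapX mmap1U.
by rewrite !mmapXi.
Qed.

Let twisted_monomial (m : 'X_{1..n}) : twisted 'X_[m].
Proof.
rewrite mpolyXE_id; apply: (big_ind twisted twisted_one twisted_mul) => i _.
elim: (m i) => [|e IHe]; first by rewrite expr0.
by rewrite exprS; apply: twisted_mul (twisted_var i) IHe.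
Qed.

Let twisted_lin c P Q : twisted P -> twisted Q -> twisted (c *: P + Q).
Proof.
rewrite /twisted msymD msymZ !mmapD !mmapZ /= !mulr_algl => TP TQ.
rewrite mulrDr -scalerAr TP TQ mulrDl -scalerAl opprD addrACA -scalerBr.
by rewrite [k * (c *: _ + _)]mulrDr -scalerAr scalerDr addrACA.
Qed.

Lemma twisted_derivation (P : {mpoly R[n]}) :
  T * phi P = phi (msym s P) * T + k * (phi P - phi (msym s P)).
Proof.
elim/mpolyind: P => [|c m P _ _ IH]; last exact: twisted_lin (twisted_monomial m) IH.
by rewrite msym0 !mmap0 subrr !mulr0 mul0r addr0.
Qed.

End TwistedDerivation.

Theorem lemma2p6 (R : idomainType) (n r : nat) (q : R) (u : 'I_r -> R)
    (F : 'I_r -> {poly R}) (A : algType R) (t T : 'I_n -> A)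
    (p p' : 'I_n) (P : {mpoly R[n]}) :
  (2 <= n)%N -> (1 <= r)%N ->
  q \is a GRing.unit -> Delta u \is a GRing.unit ->
  is_F_family u F ->
  AK_relations q u F t T ->
  val p' = p.+1 ->
  in_AK_ideal u (P - msym (tperm p p') P) ->
  T p * mmap (in_alg A) t P = mmap (in_alg A) t P * T p.
Proof.
move=> _ _ _ DU HF [_ [t_root [_ [_ [t_comm [T_far T_adj]]]]]] p'E P_sym.
have [T_p' T_p] := T_adj p p' p'E.
pose k := corr_quot q u F (t p) (t p').
have k_comm i : GRing.comm k (t i) by apply/commr_sym/comm_corr_quot.
have corrE : corr q u F (t p) (t p') = k * (t p' - t p) by apply: corr_factor.
have T_t i : T p * t i = t (tperm p p' i) * T p + k * (t i - t (tperm p p' i)).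
  have [->|ip] := eqVneq i p; first by rewrite tpermL T_p corrE -mulrN opprB.
  have [->|ip'] := eqVneq i p'; first by rewrite tpermR T_p' corrE.
  rewrite tpermD 1?eq_sym // subrr mulr0 addr0; apply: T_far => //.
    by rewrite -p'E ltn_ord.
  by rewrite -p'E.
have P_fixed : mmap (in_alg A) t (msym (tperm p p') P) = mmap (in_alg A) t P.
  by apply/eqP; rewrite eq_sym -subr_eq0 -mmapB (mmap_AK_ideal t_comm t_root P_sym).
by rewrite (twisted_derivation t_comm k_comm T_t) P_fixed subrr mulr0 addr0.
Qed.
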